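(* Let $p$ be a prime, $q=p^l$, $m\ge1$, $n=2m$. For any $0\leqslant r<n(q-1)$ and $I\subseteq M_r$, the code $\mathcal{C}_q(r,I,n)$ is affine-invariant, i.e. for every $a\in\mathbb{F}_{q^n}^*$ and $b\in\mathbb{F}_{q^n}$, if $(c_g)_{g\in\mathbb{F}_{q^n}}\in\mathcal{C}_q(r,I,n)$ then the vector $(c'_g)_{g\in\mathbb{F}_{q^n}}$ with $c'_{ag+b}=c_g$ for all $g$ also lies in $\mathcal{C}_q(r,I,n)$.
   Context: Let $N=q^n-1$ and $\alpha$ a primitive element of $\mathbb{F}_{q^n}$. Every integer $0\le u\le q^n-1$ is written $u=\sum_{i=0}^{n-1}u_iq^i$, $u_i\in\{0,\dots,q-1\}$; $\mathrm{wt}_q(u)=\sum u_i$, $O(u)=\sum_{i\text{ odd}}u_i$, $E(u)=\sum_{i\text{ even}}u_i$. For $-1\le r<n(q-1)$, $Z_r=\{\alpha^u\mid 0<u\le q^n-1,\ \mathrm{wt}_q(u)\le n(q-1)-r-1\}$. For $0\le r\le n(q-1)$ and integer $k\ge0$, $\Theta^{(r)}_k=\{\alpha^u\mid 0\le u\le q^n-1,\ \mathrm{wt}_q(u)=n(q-1)-r,\ |O(u)-E(u)|=k\}$. $M_r$ is the set of even (resp. odd) integers $k\in[0,m(q-1)]$ when $r$ is even (resp. odd). For $I\subseteq M_r$, $\overline I=M_r\setminus I$ and $Z_{r,I}=Z_r\cup\bigcup_{k\in\overline I}\Theta^{(r)}_k$. A cyclic code of length $N$ over $\mathbb{F}_q$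 with zero set $Z$ is $\{(c_0,\dots,c_{N-1})\in\mathbb{F}_q^N\mid \sum_{i}c_i\beta^i=0\ \forall\beta\in Z\}$; coordinate $i$ is labelled by the field element $\alpha^i$. $\mathcal{C}_q(r,I,n)^*$ is the cyclic code with zero set $Z_{r,I}$, and $\mathcal{C}_q(r,I,n)$ is its extended code: its coordinates are indexed by $\mathbb{F}_{q^n}$, with $c_{\alpha^i}=c_i$ and the extra coordinate labelled $0\in\mathbb{F}_{q^n}$ equal to $-\sum_i c_i$. *)

From HB Require Import structures.
From mathcomp Require Import all_boot all_order all_algebra all_field.
Set Implicit Arguments. Unset Strict Implicit. Unset Printing Implicit Defensive.
Import Order.TTheory GRing.Theory Num.Theory.

Definition digit (q i u : nat) : nat := (u %/ q ^ i) %% q.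

Definition wtq (q n u : nat) : nat := \sum_(i < n) digit q i u.
Definition Osum (q n u : nat) : nat := \sum_(i < n | odd i) digit q i u.
Definition Esum (q n u : nat) : nat := \sum_(i < n | ~~ odd i) digit q i u.

Definition absdiff (a b : nat) : nat := (a - b) + (b - a).

Section Codes.
Variables (F K : finFieldType) (f : {rmorphism F -> K}).
Variables (q n : nat) (alpha : K).

Local Open Scope ring_scope.

Definition Zr (r : nat) (beta : K) : Prop :=
  exists u : nat, [/\ (0 < u)%N, (u <= q ^ n - 1)%N,
                      (wtq q n u + r + 1 <= n * (q - 1))%N & beta = alpha ^+ u].

Definition Theta (r k : nat) (beta : K) : Prop :=
  exists u : nat, [/\ (u <= q ^ n - 1)%N,
                      (wtq q n u + r = n * (q - 1))%N,
                      absdiff (Osum q n u) (Esum q n u) = k & beta = alpha ^+ u].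

Definition Mr (m r k : nat) : bool := (k <= m * (q - 1))%N && (odd k == odd r).

Definition ZrI (m r : nat) (I : pred nat) (beta : K) : Prop :=
  Zr r beta \/ exists k : nat, [/\ Mr m r k, ~~ I k & Theta r k beta].

(* cyclic code of length N = q^n - 1 over F with zero set Z;
   a word is c : nat -> F, with coordinates c 0, ..., c (N-1) *)
Definition in_cyclic_code (Z : K -> Prop) (c : nat -> F) : Prop :=
  forall beta, Z beta -> \sum_(i < q ^ n - 1) f (c i) * beta ^+ i = 0.

(* extended code: coordinates indexed by K, c_{alpha^i} = c_i, and the
   coordinate 0 equals - \sum_i c_i *)
Definition in_extended_code (Z : K -> Prop) (w : K -> F) : Prop :=
  in_cyclic_code Z (fun i => w (alpha ^+ i)) /\
  w 0 = - \sum_(i < q ^ n - 1) w (alpha ^+ i).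

Definition in_Cq (m r : nat) (I : pred nat) (w : K -> F) : Prop :=
  in_extended_code (ZrI m r I) w.

End Codes.

From HB Require Import structures.
From mathcomp Require Import all_boot all_order all_algebra all_field.
From mathcomp Require Import zify.
Set Implicit Arguments. Unset Strict Implicit. Unset Printing Implicit Defensive.
Import GRing.Theory.
Local Open Scope ring_scope.

(* Write S_u(c) = \sum_g c_g g^u.  A word c lies in C_q(r,I,n) iff S_0(c) = 0
   and S_u(c) = 0 whenever alpha^u is a zero; every zero alpha^u, whether in
   Z_r or in some Theta^(r)_k, satisfies wt_q(u) + r <= n(q-1).  If
   c'_{ag+b} = c_g then S_u(c') = \sum_g c_g (ag+b)^u, and since q is a power
   of the characteristic, (ag+b)^u is (Lucas) a combination of monomials g^t
   whose base-q digits are bounded by those of u.  Such a t is 0, u itself,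
   or has q-weight smaller than wt_q(u), so that alpha^t is in Z_r: each
   S_t(c) vanishes. *)

Definition digit_le (q t u : nat) : Prop := forall i, (digit q i t <= digit q i u)%N.

Lemma digit0 q x : digit q 0 x = (x %% q)%N.
Proof. by rewrite /digit expn0 divn1. Qed.

Lemma digitS q i x : digit q i.+1 x = digit q i (x %/ q).
Proof. by rewrite /digit expnS divnMA. Qed.

Lemma digit_le_small q t u : (t <= u < q)%N -> digit_le q t u.
Proof.
move=> /andP[t_le_u u_lt_q] [|i]; first by rewrite !digit0 !modn_small //; lia.
by rewrite !digitS !divn_small ?(leq_ltn_trans t_le_u) // /digit div0n mod0n.
Qed.

Lemma digit_le_addMn q t0 t1 u0 u1 : (0 < q)%N -> (t0 <= u0 < q)%N ->
  digit_le q t1 u1 -> digit_le q (t0 + q * t1) (u0 + q * u1).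
Proof.
move=> q_gt0 /andP[t0_le_u0 u0_lt_q] le1 i.
have t0_lt_q : (t0 < q)%N by apply: leq_ltn_trans u0_lt_q.
case: i => [|i].
  by rewrite !digit0 ![(_ + q * _)%N]addnC ![(q * _)%N]mulnC !modnMDl !modn_small.
by rewrite !digitS ![(q * _)%N]mulnC !divnDMl // !divn_small ?add0n.
Qed.

Lemma digits_expansion q n x : (0 < q)%N -> (x < q ^ n)%N ->
  x = (\sum_(i < n) digit q i x * q ^ i)%N.
Proof.
move=> q_gt0; elim: n x => [|n IHn] x x_lt; first by rewrite big_ord0; lia.
rewrite big_ord_recl digit0 expn0 muln1.
under eq_bigr do rewrite /bump /= digitS expnS mulnCA.
rewrite -big_distrr /= -IHn; first by rewrite mulnC addnC -divn_eq.
by rewrite ltn_divLR // -expnSr.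
Qed.

Lemma digit_le_leq q t u : (1 < q)%N -> digit_le q t u -> (t <= u)%N.
Proof.
move=> q_gt1 t_le_u; have q_gt0 : (0 < q)%N by apply: ltnW.
have [k t_lt u_lt] : exists2 k, (t < q ^ k)%N & (u < q ^ k)%N.
  have lt_exp x : (x <= t + u)%N -> (x < q ^ (t + u))%N.
    by move=> x_le; apply: leq_trans (ltn_expl x q_gt1) _; rewrite leq_pexp2l.
  by exists (t + u); apply: lt_exp; rewrite ?leq_addr ?leq_addl.
rewrite (digits_expansion q_gt0 t_lt) (digits_expansion q_gt0 u_lt).
by apply: leq_sum => i _; rewrite leq_mul2r t_le_u orbT.
Qed.

Lemma wtq_ltn q n t u : (1 < q)%N -> (u < q ^ n)%N -> digit_le q t u -> t != u ->
  (wtq q n t < wtq q n u)%N.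
Proof.
move=> q_gt1 u_lt t_le_u t_neq_u; have q_gt0 : (0 < q)%N by apply: ltnW.
have t_lt : (t < q ^ n)%N by apply: leq_ltn_trans (digit_le_leq q_gt1 t_le_u) u_lt.
have [i digit_neq] : exists i : 'I_n, digit q i t != digit q i u.
  apply/existsP; apply: contraR t_neq_u => /existsPn digit_eq.
  rewrite (digits_expansion q_gt0 t_lt) (digits_expansion q_gt0 u_lt).
  by apply/eqP/eq_bigr => j _; rewrite (eqP (negPn (digit_eq j))).
rewrite /wtq (bigD1 i) // [X in (_ < X)%N](bigD1 i) //= -addSn.
by apply: leq_add; [rewrite ltn_neqAle digit_neq t_le_u | apply: leq_sum].
Qed.

Section DigitSpan.
Variables (R : comNzRingType) (q : nat).
Hypotheses (q_gt1 : (1 < q)%N) (q_pchar : [pchar R].-nat q).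

Definition digit_span (u : nat) (h : R -> R) : Prop :=
  exists L : seq (R * nat), (forall z, z \in L -> digit_le q z.2 u) /\
    forall x, h x = \sum_(z <- L) z.1 * x ^+ z.2.

Lemma exprq_sum (L : seq (R * nat)) x :
  (\sum_(z <- L) z.1 * x ^+ z.2) ^+ q = \sum_(z <- L) z.1 ^+ q * x ^+ (q * z.2).
Proof.
elim: L => [|z L IHL]; first by rewrite !big_nil expr0n gtn_eqF // ltnW.
by rewrite !big_cons exprDn_pchar // IHL exprMn -exprM mulnC.
Qed.

Lemma digit_span_small a b u : (u < q)%N -> digit_span u (fun x => (a * x + b) ^+ u).
Proof.
move=> u_lt_q.
exists [seq (b ^+ (u - i) * a ^+ i *+ 'C(u, i), i) | i <- iota 0 u.+1].
split=> [z /mapP[i] | x].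
  rewrite mem_iota add0n ltnS => /andP[_ i_le] -> /=.
  by apply: digit_le_small; rewrite i_le.
rewrite addrC exprDn big_map -[iota 0 u.+1]/(index_iota 0 u.+1) big_mkord.
by apply: eq_bigr => i _; rewrite exprMn mulrnAl mulrA.
Qed.

Lemma digit_span_mul u0 u1 (h0 h1 h : R -> R) : (u0 < q)%N ->
  digit_span u0 h0 -> digit_span u1 h1 -> (forall x, h x = h0 x * h1 x ^+ q) ->
  digit_span (u0 + q * u1) h.
Proof.
move=> u0_lt_q [L0 [le0 h0E]] [L1 [le1 h1E]] hE.
exists [seq (z0.1 * z1.1 ^+ q, (z0.2 + q * z1.2)%N) | z0 <- L0, z1 <- L1].
split=> [z /allpairsP[[z0 z1] [/= z0_in z1_in ->]] | x] /=.
  apply: digit_le_addMn (le1 _ z1_in); first exact: ltnW.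
  by rewrite (digit_le_leq q_gt1 (le0 _ z0_in)).
rewrite hE h0E h1E exprq_sum big_allpairs_dep /= mulr_suml.
apply: eq_bigr => z0 _; rewrite mulr_sumr; apply: eq_bigr => z1 _.
by rewrite exprD mulrACA.
Qed.

Lemma digit_span_affine_exp a b u : digit_span u (fun x => (a * x + b) ^+ u).
Proof.
elim/ltn_ind: u => u IHu; have [u_lt_q | u_ge_q] := ltnP u q.
  exact: digit_span_small.
have q_gt0 : (0 < q)%N by apply: ltnW.
rewrite {1}(divn_eq u q) addnC mulnC.
apply: (digit_span_mul (h0 := fun x => (a * x + b) ^+ (u %% q))).
- by rewrite ltn_mod.
- by apply: digit_span_small; rewrite ltn_mod.
- by apply: IHu; rewrite ltn_Pdiv //; lia.
by move=> x; rewrite -exprM -exprD addnC -divn_eq.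
Qed.

End DigitSpan.

Lemma sum_prim_root_powers (K : finFieldType) (V : nmodType) alpha (G : K -> V) :
  #|K|.-1.-primitive_root alpha ->
  \sum_(i < #|K|.-1) G (alpha ^+ i) = \sum_(x | x != 0) G x.
Proof.
move=> prim; set N := #|K|.-1.
have alpha_neq0 : alpha != 0.
  apply/eqP => alpha0; move: (prim_expr_order prim).
  rewrite alpha0 expr0n gtn_eqF ?(prim_order_gt0 prim) //.
  by move/eqP; rewrite eq_sym oner_eq0.
have inj : injective (fun i : 'I_N => alpha ^+ i).
  move=> i j /eqP; rewrite (eq_prim_root_expr prim) !modn_small //.
  by move/eqP/val_inj.
have imE : [set alpha ^+ i | i : 'I_N] = [set~ 0].
  apply/eqP; rewrite eqEcard cardsC1 card_imset // card_ord leqnn andbT.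
  by apply/subsetP => _ /imsetP[i _ ->]; rewrite in_setC1 expf_neq0.
rewrite -(big_imset _ (in2W inj)) /= imE.
by apply: eq_bigl => x; rewrite in_setC1.
Qed.

Lemma sum_comp_affine (K : finFieldType) (V : nmodType) (G : K -> V) a b :
  a != 0 -> \sum_x G (a * x + b) = \sum_x G x.
Proof.
move=> a_neq0; apply/esym/(reindex_inj (h := fun x => a * x + b)).
by move=> x y /addIr/(mulfI a_neq0).
Qed.

Lemma card_expn_base_gt1 (R : finNzRingType) q n : #|R| = (q ^ n)%N -> (1 < q)%N.
Proof.
move=> cardR; have := card_finNzRing_gt1 R; rewrite {}cardR.
by case: q => [|[|//]]; [case: n => // n'; rewrite exp0n | rewrite exp1n].
Qed.

Lemma pchar_nat_card (K : finFieldType) p l q n :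
  prime p -> q = (p ^ l)%N -> #|K| = (q ^ n)%N -> [pchar K].-nat q.
Proof.
move=> p_prime -> cardK; have pK : p \in [pchar K].
  by apply: (card_finPcharP (n := l * n)); rewrite // cardK expnM.
by rewrite (eq_pnat _ (pcharf_eq pK)) pnatX pnat_id.
Qed.

Section PowerSums.
Variables (F K : finFieldType) (f : {rmorphism F -> K}) (q n : nat) (alpha : K).
Hypotheses (cardK : #|K| = (q ^ n)%N)
  (alpha_prim : (q ^ n - 1).-primitive_root alpha).

Let N_eq : (q ^ n - 1)%N = #|K|.-1.
Proof. by rewrite cardK subn1. Qed.

Let alpha_prim_card : #|K|.-1.-primitive_root alpha.
Proof. by rewrite -N_eq. Qed.

Let q_gt1 : (1 < q)%N := card_expn_base_gt1 cardK.

Definition power_sum (d : K -> F) (u : nat) : K := \sum_x f (d x) * x ^+ u.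

Lemma power_sum0 d : power_sum d 0 = f (\sum_x d x).
Proof. by rewrite rmorph_sum; apply: eq_bigr => x _; rewrite mulr1. Qed.

Lemma cyclic_sum_power_sum d u : (0 < u)%N ->
  \sum_(i < q ^ n - 1) f (d (alpha ^+ i)) * (alpha ^+ u) ^+ i = power_sum d u.
Proof.
move=> u_gt0; rewrite /power_sum (bigD1 0) //= expr0n gtn_eqF // mulr0 add0r.
rewrite N_eq -(sum_prim_root_powers (fun x => f (d x) * x ^+ u) alpha_prim_card).
by apply: eq_bigr => i _; rewrite exprAC.
Qed.

Lemma extended_coord0P (w : K -> F) :
  w 0 = - \sum_(i < q ^ n - 1) w (alpha ^+ i) <-> \sum_x w x = 0.
Proof.
rewrite (bigD1 0) //= N_eq (sum_prim_root_powers w alpha_prim_card).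
by split=> [-> | /eqP]; [rewrite addNr | rewrite addr_eq0 => /eqP].
Qed.

Lemma power_sum_affine_eq0 (c c' : K -> F) a b u :
  [pchar K].-nat q -> a != 0 -> (forall x, c' (a * x + b) = c x) ->
  (forall t, digit_le q t u -> power_sum c t = 0) -> power_sum c' u = 0.
Proof.
move=> q_pchar a_neq0 c'E c_eq0.
have [L [L_le expE]] := digit_span_affine_exp q_gt1 q_pchar a b u.
rewrite /power_sum -(sum_comp_affine _ b a_neq0).
under eq_bigr do rewrite c'E expE mulr_sumr.
rewrite exchange_big big1_seq // => z /andP[_ z_in].
under eq_bigr do rewrite mulrCA.
by rewrite -mulr_sumr -/(power_sum c z.2) (c_eq0 _ (L_le _ z_in)) mulr0.
Qed.

End PowerSums.

Section ZeroExponents.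
Variables (K : finFieldType) (q n : nat) (alpha : K) (r : nat).
Hypothesis q_gt1 : (1 < q)%N.

Lemma ZrI_exponent m I beta :
  (r < n * (q - 1))%N -> ZrI q n alpha m r I beta ->
  exists u, [/\ (0 < u)%N, (u < q ^ n)%N, (wtq q n u + r <= n * (q - 1))%N
              & beta = alpha ^+ u].
Proof.
move=> r_lt; have q_n_gt0 : (0 < q ^ n)%N by rewrite expn_gt0 ltnW.
case=> [[u [u_gt0 u_le wt_u ->]] | [k [_ _ [u [u_le wt_u _ ->]]]]].
  by exists u; split=> //; lia.
exists u; split=> //; [| lia | lia].
rewrite lt0n; apply: contraTneq r_lt => u0; rewrite -wt_u u0 /wtq big1 ?ltnn //.
by move=> i _; rewrite /digit div0n mod0n.
Qed.

Lemma Zr_digit_le u t : (u < q ^ n)%N ->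
  (wtq q n u + r <= n * (q - 1))%N -> digit_le q t u -> (0 < t)%N -> t != u ->
  Zr q n alpha r (alpha ^+ t).
Proof.
move=> u_lt wt_u t_le_u t_gt0 t_neq_u.
have := wtq_ltn q_gt1 u_lt t_le_u t_neq_u; have := digit_le_leq q_gt1 t_le_u.
by exists t; split=> //; lia.
Qed.

End ZeroExponents.

Theorem theorem3p11
  (p l m n q : nat) (F K : finFieldType) (f : {rmorphism F -> K}) (alpha : K)
  (hp : prime p) (hq : q = (p ^ l)%N) (hm : (1 <= m)%N) (hn : n = (2 * m)%N)
  (hF : #|F| = q) (hK : #|K| = (q ^ n)%N)
  (halpha : (q ^ n - 1)%N.-primitive_root alpha)
  (r : nat) (hr : (r < n * (q - 1))%N)
  (I : pred nat) (hI : forall k, I k -> Mr q m r k)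
  (a b : K) (ha : a != 0)
  (c c' : K -> F) :
  in_Cq f q n alpha m r I c ->
  (forall g : K, c' (a * g + b) = c g) ->
  in_Cq f q n alpha m r I c'.
Proof.
move=> [c_cyc /(extended_coord0P hK halpha) sum_c] c'E.
have q_pchar := pchar_nat_card hp hq hK.
have q_gt1 := card_expn_base_gt1 hK.
split; last first.
  apply/(extended_coord0P hK halpha).
  by rewrite -(sum_comp_affine _ b ha); under eq_bigr do rewrite c'E.
move=> beta zero_beta.
have [u [u_gt0 u_lt wt_u beta_u]] := ZrI_exponent q_gt1 hr zero_beta; subst beta.
rewrite (cyclic_sum_power_sum f hK halpha) //.
apply: (power_sum_affine_eq0 hK q_pchar ha c'E) => t t_le_u.
have [-> | t_gt0] := posnP t; first by rewrite power_sum0 sum_c rmorph0.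
rewrite -(cyclic_sum_power_sum f hK halpha) //; apply: c_cyc.
have [-> // | t_neq_u] := eqVneq t u.
by left; apply: (Zr_digit_le alpha q_gt1 u_lt wt_u).
Qed.
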